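(* For $n\ge2$ and $\theta=(\theta_{ij})_{1\le i,j\le n-1}\in\mathbb{R}^{(n-1)^2}$ let $$\Phi(\theta)=\binom n2^{-2}\Big(\sum_{\substack{i>\ell\\ j>k}}\cos(\theta_{ij}-\theta_{ik}-\theta_{\ell j}+\theta_{\ell k})+\sum_{\substack{i>\ell\\ j}}\cos(\theta_{ij}-\theta_{\ell j})+\sum_{\substack{j>k\\ i}}\cos(\theta_{ij}-\theta_{ik})+\sum_{i,j}\cos\theta_{ij}\Big),$$ where all indices $i,\ell,j,k$ range over $\{1,\dots,n-1\}$. There exist $n_0,q_0$ such that for all integers $n\ge n_0$, $q\ge q_0$ and every $\theta\in[-\pi,\pi]^{(n-1)^2}$ with $\|\theta\|_\infty>1/\sqrt q$, $$\Phi(\theta)\le1-\frac1{400n^2q}.$$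
   Context: $\Phi$ is the characteristic function of one increment of the $n\times n$ Diaconis–Gangolli walk, restricted to the first $n-1$ rows and $n-1$ columns. *)

From mathcomp Require Import all_boot all_order all_algebra.
From mathcomp Require Import all_classical all_reals all_analysis.
Set Implicit Arguments. Unset Strict Implicit. Unset Printing Implicit Defensive.
Import Order.TTheory GRing.Theory Num.Theory.
Local Open Scope ring_scope.

(* Characteristic function Phi of one increment of the n x n Diaconis-Gangolli
   walk restricted to the first n-1 rows/columns.  theta : 'M[R]_(n.-1);
   index i : 'I_(n.-1) stands for paper index i+1 (order preserved). *)
Definition Phi (R : realType) (n : nat) (theta : 'M[R]_(n.-1)) : R :=
  ('C(n, 2)%:R ^+ 2)^-1 *
  ( \sum_(i < n.-1) \sum_(l < n.-1 | (l < i)%N) \sum_(j < n.-1) \sum_(k < n.-1 | (k < j)%N)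
        cos (theta i j - theta i k - theta l j + theta l k)
  + \sum_(i < n.-1) \sum_(l < n.-1 | (l < i)%N) \sum_(j < n.-1)
        cos (theta i j - theta l j)
  + \sum_(j < n.-1) \sum_(k < n.-1 | (k < j)%N) \sum_(i < n.-1)
        cos (theta i j - theta i k)
  + \sum_(i < n.-1) \sum_(j < n.-1) cos (theta i j)).

From mathcomp Require Import all_boot all_order all_algebra.
From mathcomp Require Import all_classical all_reals all_analysis.
From mathcomp Require Import ring lra.
Import Order.TTheory GRing.Theory Num.Theory.
Set Implicit Arguments. Unset Strict Implicit. Unset Printing Implicit Defensive.
Local Open Scope ring_scope.

(* With vers x = 1 - cos x, the gap 1 - Phi(theta) is a normalised sum of
   versines of the phases of all moves.  Since vers (a + b + c + d) is at most
   4 (vers a + vers b + vers c + vers d), writing theta i j through each of the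
   (n-1)^2 cells (r, c) as a sum of four move phases gives
   (n-1)^2 vers (theta i j) <= 16 (sum over moves).  Together with
   t^2 <= pi^2 vers t on [-pi, pi] and q (theta i j)^2 > 1 this bounds the gap
   below by 1 / (64 n^2 q). *)

Definition vers (R : realType) (x : R) := 1 - cos x.

Section Versine.
Variable R : realType.
Implicit Types x y t : R.

Lemma vers_ge0 x : 0 <= vers x.
Proof. by rewrite subr_ge0 cos_le1. Qed.

Lemma versN x : vers (- x) = vers x.
Proof. by rewrite /vers cosN. Qed.

Lemma vers0 : vers (0 : R) = 0.
Proof. by rewrite /vers cos0 subrr. Qed.

Lemma versD x y : vers (x + y) <= 2 * vers x + 2 * vers y.
Proof.
rewrite /vers cosD.
have := cos2Dsin2 x; have := cos2Dsin2 y; have := cos_le1 x; have := cos_le1 y.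
have := sqr_ge0 (sin x - sin y).
nra.
Qed.

Lemma vers_sum4 (a b c d : R) : vers (a + b + c + d) <= 4 * (vers a + vers b + vers c + vers d).
Proof.
have := versD (a + b) (c + d); have := versD a b; have := versD c d.
by rewrite addrA; lra.
Qed.

Lemma vers_double t : vers (2 * t) <= 4 * vers t.
Proof. by have := versD t t; rewrite -[t + t]mulr2n -[t *+ 2]mulr_natl; lra. Qed.

Lemma vers_ge1 t : pi / 2 <= t <= pi -> 1 <= vers t.
Proof.
move=> /andP[t_ge t_le].
have -> : t = (t - pi / 2) + pi / 2 by rewrite subrK.
rewrite /vers cosDpihalf opprK lerDl.
by apply: sin_ge0_pi; rewrite subr_ge0 t_ge /=; lra.
Qed.

Lemma sqr_le_vers_pihalf t : pi / 2 <= t <= pi -> t ^+ 2 <= pi ^+ 2 * vers t.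
Proof.
move=> t_range; have := vers_ge1 t_range; move/andP: t_range => [t_ge t_le].
have := @pi_gt0 R; have := sqr_ge0 (pi - t); nra.
Qed.

(* [vers (2 t) <= 4 vers t] lets the bound on [pi/2, pi] propagate down to 0. *)
Lemma sqr_le_vers_doubling k t :
  0 <= t <= pi -> pi <= 2 ^+ k * (2 * t) -> t ^+ 2 <= pi ^+ 2 * vers t.
Proof.
elim: k t => [|k IHk] t /andP[t_ge0 t_le] t_big.
  by apply: sqr_le_vers_pihalf; rewrite t_le andbT; rewrite expr0 mul1r in t_big; lra.
have [t_half|t_small] := lerP pi (2 * t).
  by apply: sqr_le_vers_pihalf; rewrite t_le andbT; lra.
rewrite exprSr -mulrA in t_big.
have /IHk /(_ t_big) : 0 <= 2 * t <= pi by apply/andP; split; lra.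
have := vers_double t; have := @pi_gt0 R; nra.
Qed.

Lemma sqr_le_vers t : `|t| <= pi -> t ^+ 2 <= pi ^+ 2 * vers t.
Proof.
move=> t_le; rewrite -real_normK ?num_real //.
have -> : vers t = vers `|t| by rewrite /vers cos_norm.
have [->|t_neq0] := eqVneq `|t| 0; first by rewrite expr0n mulr_ge0 ?sqr_ge0 ?vers_ge0.
have t_gt0 : 0 < `|t| by rewrite lt_def t_neq0 normr_ge0.
set k := Num.Def.archi_bound (pi / `|t|).
have /ltW : pi / `|t| < k%:R by apply: archi_boundP; rewrite divr_ge0 ?pi_ge0.
rewrite ler_pdivrMr // => /le_trans k_bound.
apply: (sqr_le_vers_doubling (k := k)); first by rewrite normr_ge0.
apply: k_bound; rewrite mulrA ler_pM2r // -natrX -natrM ler_nat.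
by rewrite (leq_trans (ltnW (ltn_expl k (ltnSn 1)))) // leq_pmulr.
Qed.

Lemma vers_gt_inv_sqrt (q t : R) :
  0 < q -> `|t| <= pi -> 1 / Num.sqrt q < `|t| -> 1 < 16 * q * vers t.
Proof.
move=> q_gt0 t_le t_big.
have sqrt_q_gt0 : 0 < Num.sqrt q by rewrite sqrtr_gt0.
have qt2_gt1 : 1 < q * t ^+ 2.
  rewrite ltr_pdivrMr // in t_big.
  rewrite -real_normK ?num_real // -(sqr_sqrtr (ltW q_gt0)) -exprMn mulrC.
  by rewrite expr_gt1 // (lt_le_trans ltr01 (ltW t_big)).
have pi_le4 : pi <= 4 :> R by have := @pihalf_lt2 R; lra.
have := sqr_le_vers t_le; have := @pi_gt0 R; have := vers_ge0 t; nra.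
Qed.
End Versine.

Lemma ler_sum_of_le_term (R : numDomainType) (I : finType) (F : I -> R) (i0 : I) x :
  (forall i, 0 <= F i) -> x <= F i0 -> x <= \sum_i F i.
Proof.
move=> F_ge0 /le_trans; apply; rewrite (bigD1 i0) //= lerDl.
by apply: sumr_ge0.
Qed.

Lemma sum_symmetric_ltn (V : nmodType) m (h : 'I_m -> 'I_m -> V) :
  (forall i, h i i = 0) -> (forall i l, h i l = h l i) ->
  \sum_(i < m) \sum_(l < m) h i l = (\sum_(i < m) \sum_(l < m | (l < i)%N) h i l) *+ 2.
Proof.
move=> h_diag h_sym.
have split_ltn i l : h i l = (if (l < i)%N then h i l else 0) + (if (i < l)%N then h l i else 0).
  by case: ltngtP => [||/val_inj ->]; rewrite ?addr0 ?add0r ?h_diag // h_sym.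
under eq_bigr => i _ do under eq_bigr => l _ do rewrite split_ltn.
under eq_bigr => i _ do rewrite big_split /=.
rewrite big_split /= [X in _ + X]exchange_big /= mulr2n.
by congr (_ + _); apply: eq_bigr => i _; rewrite -big_mkcond.
Qed.

Section MoveSums.
Variables (R : realType) (m : nat).
Implicit Types (theta : 'M[R]_m) (f g : R -> R).

(* A move of the walk on n x n tables picks two rows and two columns; on the
   first m = n - 1 rows and columns its phase is
   theta i j - theta i k - theta l j + theta l k, the entries of the last row
   and column counting as 0.  The four sums collect the moves avoiding the last
   row and column, those using the last column only, the last row only, and
   both. *)
Definition inner_sum f theta :=
  \sum_(i < m) \sum_(l < m | (l < i)%N) \sum_(j < m) \sum_(k < m | (k < j)%N)
    f (theta i j - theta i k - theta l j + theta l k).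
Definition row_pair_sum f theta :=
  \sum_(i < m) \sum_(l < m | (l < i)%N) \sum_(j < m) f (theta i j - theta l j).
Definition col_pair_sum f theta :=
  \sum_(j < m) \sum_(k < m | (k < j)%N) \sum_(i < m) f (theta i j - theta i k).
Definition entry_sum f theta := \sum_(i < m) \sum_(j < m) f (theta i j).

Definition move_sum f theta :=
  inner_sum f theta + row_pair_sum f theta + col_pair_sum f theta + entry_sum f theta.

Lemma move_sumB f g theta :
  move_sum (f \- g) theta = move_sum f theta - move_sum g theta.
Proof.
have -> (a b c d a' b' c' d' : R) :
  a + b + c + d - (a' + b' + c' + d') = (a - a') + (b - b') + (c - c') + (d - d').
  by ring.
by congr (_ + _ + _ + _); do ?[rewrite -sumrB; apply: eq_bigr => ? _].
Qed.

Lemma sum_ltn_const (c : R) : \sum_(i < m) \sum_(l < m | (l < i)%N) c = 'C(m, 2)%:R * c.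
Proof.
have sum_lt (i : 'I_m) : \sum_(l < m | (l < i)%N) c = c *+ i.
  by rewrite -(big_ord_widen m (fun=> c) (ltnW (ltn_ord i))) sumr_const card_ord.
under eq_bigr do rewrite sum_lt.
by rewrite sumrMnr -(big_mkord xpredT id) bin2_sum mulr_natl.
Qed.

Lemma move_sum_const (c : R) theta : move_sum (fun=> c) theta = 'C(m.+1, 2)%:R ^+ 2 * c.
Proof.
rewrite /move_sum /inner_sum /row_pair_sum /col_pair_sum /entry_sum /=.
rewrite !sum_ltn_const !sumr_const !card_ord binS bin1 natrD.
ring.
Qed.

Lemma move_sum_cos theta : move_sum cos theta = 'C(m.+1, 2)%:R ^+ 2 - move_sum (@vers R) theta.
Proof.
have -> : cos = (fun=> 1) \- @vers R by apply/funext => x /=; rewrite /vers opprB addrC subrK.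
by rewrite move_sumB move_sum_const mulr1.
Qed.

Lemma Phi_move_sum_vers theta : (0 < m)%N ->
  Phi (n := m.+1) theta = 1 - move_sum (@vers R) theta / 'C(m.+1, 2)%:R ^+ 2.
Proof.
move=> m_gt0; have C_neq0 : 'C(m.+1, 2)%:R ^+ 2 != 0 :> R.
  by rewrite expf_neq0 // pnatr_eq0 -lt0n bin_gt0.
have -> : Phi (n := m.+1) theta = ('C(m.+1, 2)%:R ^+ 2)^-1 * move_sum cos theta by [].
by rewrite move_sum_cos mulrBr mulVf // mulrC.
Qed.

Section EvenSums.
Variable f : R -> R.
Hypotheses (fN : forall x, f (- x) = f x) (f0 : f 0 = 0).

Lemma sum_all_inner theta :
  \sum_(i < m) \sum_(l < m) \sum_(j < m) \sum_(k < m)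
    f (theta i j - theta i k - theta l j + theta l k) = 4 * inner_sum f theta.
Proof.
have D_diag_rows a b : a - b - a + b = 0 :> R by ring.
have D_diag_cols a b : a - a - b + b = 0 :> R by ring.
have D_swap_rows a b c d : c - d - a + b = - (a - b - c + d) :> R by ring.
have D_swap_cols a b c d : b - a - d + c = - (a - b - c + d) :> R by ring.
rewrite sum_symmetric_ltn; first last.
- by move=> i l; apply: eq_bigr => j _; apply: eq_bigr => k _; rewrite D_swap_rows fN.
- by move=> i; apply: big1 => j _; apply: big1 => k _; rewrite D_diag_rows f0.
have sym_cols (i : 'I_m) : \sum_(l < m | (l < i)%N) \sum_(j < m) \sum_(k < m)
      f (theta i j - theta i k - theta l j + theta l k)
    = (\sum_(l < m | (l < i)%N) \sum_(j < m) \sum_(k < m | (k < j)%N)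
      f (theta i j - theta i k - theta l j + theta l k)) *+ 2.
  rewrite -sumrMnl; apply: eq_bigr => l _.
  rewrite sum_symmetric_ltn // => [j|j k]; first by rewrite D_diag_cols f0.
  by rewrite D_swap_cols fN.
under eq_bigr => i _ do rewrite sym_cols.
by rewrite sumrMnl -mulrnA mulr_natl.
Qed.

Lemma sum_all_row_pairs theta :
  \sum_(i < m) \sum_(l < m) \sum_(j < m) f (theta i j - theta l j) = 2 * row_pair_sum f theta.
Proof.
rewrite sum_symmetric_ltn ?mulr_natl // => [i|i l].
  by apply: big1 => j _; rewrite subrr f0.
by apply: eq_bigr => j _; rewrite -opprB fN.
Qed.

Lemma sum_all_col_pairs theta :
  \sum_(j < m) \sum_(k < m) \sum_(i < m) f (theta i j - theta i k) = 2 * col_pair_sum f theta.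
Proof.
rewrite sum_symmetric_ltn ?mulr_natl // => [j|j k].
  by apply: big1 => i _; rewrite subrr f0.
by apply: eq_bigr => i _; rewrite -opprB fN.
Qed.

Hypotheses (f_ge0 : forall x, 0 <= f x)
  (f_sum4 : forall a b c d, f (a + b + c + d) <= 4 * (f a + f b + f c + f d)).

(* Write theta i0 j0 through every cell (r, c) as a sum of four move phases. *)
Lemma entry_le_move_sum theta i0 j0 :
  m%:R ^+ 2 * f (theta i0 j0) <= 16 * move_sum f theta.
Proof.
pose phases (r c : 'I_m) := f (theta i0 j0 - theta i0 c - theta r j0 + theta r c)
    + f (theta i0 c - theta r c) + f (theta r j0 - theta r c) + f (theta r c).
have through r c : f (theta i0 j0) <= 4 * phases r c.
  have -> : theta i0 j0 = (theta i0 j0 - theta i0 c - theta r j0 + theta r c)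
      + (theta i0 c - theta r c) + (theta r j0 - theta r c) + theta r c by ring.
  exact: f_sum4.
have S_inner : \sum_(r < m) \sum_(c < m) f (theta i0 j0 - theta i0 c - theta r j0 + theta r c)
    <= 4 * inner_sum f theta.
  rewrite -sum_all_inner; apply: (ler_sum_of_le_term (i0 := i0)).
    by move=> i; do 3![apply: sumr_ge0 => ? _].
  apply: ler_sum => r _; apply: (ler_sum_of_le_term (i0 := j0)) => // j.
  by apply: sumr_ge0.
have S_row : \sum_(r < m) \sum_(c < m) f (theta i0 c - theta r c) <= 2 * row_pair_sum f theta.
  rewrite -sum_all_row_pairs; apply: (ler_sum_of_le_term (i0 := i0)) => // i.
  by do 2![apply: sumr_ge0 => ? _].
have S_col : \sum_(r < m) \sum_(c < m) f (theta r j0 - theta r c) <= 2 * col_pair_sum f theta.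
  rewrite -sum_all_col_pairs exchange_big; apply: (ler_sum_of_le_term (i0 := j0)) => // j.
  by do 2![apply: sumr_ge0 => ? _].
have sums_ge0 : [/\ 0 <= row_pair_sum f theta, 0 <= col_pair_sum f theta
    & 0 <= entry_sum f theta].
  by split; do ![apply: sumr_ge0 => ? _].
have -> : m%:R ^+ 2 * f (theta i0 j0) = \sum_(r < m) \sum_(c < m) f (theta i0 j0).
  by rewrite !sumr_const card_ord expr2 -mulrA !mulr_natl.
apply: (@le_trans _ _ (\sum_(r < m) \sum_(c < m) 4 * phases r c)).
  by do 2!(apply: ler_sum => ? _).
under eq_bigr => r _ do rewrite -mulr_sumr !big_split /=.
rewrite -mulr_sumr !big_split /= /move_sum.
have S_entry : \sum_(r < m) \sum_(c < m) f (theta r c) = entry_sum f theta by [].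
by case: sums_ge0 => *; lra.
Qed.
End EvenSums.
End MoveSums.

Theorem mainTheorem12 (R : realType) :
  exists n0 q0 : nat, forall n q : nat, (2 <= n)%N -> (n0 <= n)%N -> (q0 <= q)%N ->
  forall theta : 'M[R]_(n.-1),
    (forall i j, - pi <= theta i j <= pi) ->
    (exists i j, 1 / Num.sqrt (q%:R) < `|theta i j|) ->
    Phi theta <= 1 - 1 / (400 * (n%:R) ^+ 2 * q%:R).
Proof.
exists 2%N, 1%N => -[|m] q // m_gt0 _ q_gt0 theta theta_range [i0 [j0 theta0_big]].
rewrite Phi_move_sum_vers // lerD2l lerN2.
set F := move_sum _ theta.
have F_big : m%:R ^+ 2 * vers (theta i0 j0) <= 16 * F.
  exact: entry_le_move_sum (@versN R) (@vers0 R) (@vers_ge0 R) (@vers_sum4 R) theta i0 j0.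
have q_pos : (0 : R) < q%:R by rewrite ltr0n.
have vers_big : 1 < 16 * q%:R * vers (theta i0 j0).
  by apply: vers_gt_inv_sqrt; rewrite // ler_norml theta_range.
have binom : 'C(m.+1, 2)%:R * 2 = m.+1%:R * m%:R :> R.
  by rewrite -!natrM bin_ffact ffactnS ffactn1.
have C_pos : (0 : R) < 'C(m.+1, 2)%:R ^+ 2 by rewrite exprn_gt0 // ltr0n bin_gt0.
have X_pos : (0 : R) < 400 * m.+1%:R ^+ 2 * q%:R by rewrite !mulr_gt0 // exprn_gt0.
rewrite ler_pdivrMr // mulrAC ler_pdivlMr // mul1r.
have m2_le : m%:R ^+ 2 <= 256 * q%:R * F.
  have := sqr_ge0 (m%:R : R); have := vers_ge0 (theta i0 j0); nra.
have C_sq : ('C(m.+1, 2)%:R * 2) ^+ 2 = (m.+1%:R * m%:R) ^+ 2 :> R by rewrite binom.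
have := sqr_ge0 (m.+1%:R : R); nra.
Qed.
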